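(* Let $B$ be a connected building set on $V=[n]$ and let $\emptyset=I_0\subsetneq I_1\subsetneq\cdots\subsetneq I_k=V$ be a splitting chain of $B$. For $i\in V$ let $l(i)$ be the unique $j$ with $i\in I_j\setminus I_{j-1}$, and let $S_i$ be the largest (by inclusion) element of $B$ containing $i$ and contained in $I_{l(i)-1}\cup\{i\}$. Then $S_i=V$ for exactly one $i\in V$, the sets $S_i$ ($i\in V$) are pairwise distinct, and $N=\{S_i: i\in V\}\setminus\{V\}$ is a maximal (with respect to inclusion) nested set of $B$.
   Context: A building set on a finite set $V$ is a collection $B$ of nonempty subsets of $V$ such that $\{v\}\in B$ for all $v\in V$ and such that $I,J\in B$, $I\cap J\neq\emptyset$ imply $I\cup J\in B$. It is connected if $V\in B$, and discrete if it consists only of the singletons. For $I\subseteq V$, the restriction is $B|_I=\{J\in B: J\subseteq I\}$ and the contraction is $B/I=\{J\subseteq V\setminus I: J\neq\emptyset,\ J\in B\text{ or }J\cup I'\in B\text{ for some }I'\subseteq I\}$. A splitting chain of $B$ is a chain $\emptyset=I_0\subsetneq I_1\subsetneq\cdots\subsetneq I_k=V$ such that for every $1\le j\le k$ the building set $(B|_{I_j})/I_{j-1}$ on $I_j\setminus I_{j-1}$ is discrete. For a connected building set $B$ on $V$, a nested set is a subcollection $N\subseteq B\setminus\{V\}$ such that (N1) any two members of $N$ are either comparable by inclusion or disjoint, and (N2) the union of any $p\ge2$ pairwise disjoint members of $N$ does not belong to $B$. (Since $B$ is closed under unions of intersecting members, the largest element $S_i$ above exists.) *)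

(* Ground set V = [n] is modelled as the finite type 'I_n. *)
From mathcomp Require Import all_boot.
Set Implicit Arguments. Unset Strict Implicit. Unset Printing Implicit Defensive.

Section Building.
Variable T : finType.

Definition building_set_on (W : {set T}) (B : {set {set T}}) : Prop :=
  (forall I, I \in B -> (I != set0) /\ I \subset W) /\
  (forall v, v \in W -> [set v] \in B) /\
  (forall I J, I \in B -> J \in B -> I :&: J != set0 -> I :|: J \in B).

Definition building_set (B : {set {set T}}) : Prop := building_set_on [set: T] B.

Definition connected_bs (B : {set {set T}}) : Prop := [set: T] \in B.

Definition discrete_bs (B : {set {set T}}) : Prop := forall J, J \in B -> #|J| = 1.

Definition restr (B : {set {set T}}) (I : {set T}) : {set {set T}} :=
  [set J in B | J \subset I].

Definition contr (W : {set T}) (B : {set {set T}}) (I : {set T}) : {set {set T}} :=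
  [set J : {set T} | (J != set0) && (J \subset W :\: I) &&
     [exists I' : {set T}, (I' \subset I) && ((J \in B) || (J :|: I' \in B))]].

Definition splitting_chain (B : {set {set T}}) (k : nat) (I : nat -> {set T}) : Prop :=
  I 0 = set0 /\ I k = [set: T] /\
  (forall j, j < k -> I j \proper I j.+1) /\
  (forall j, 1 <= j <= k -> discrete_bs (contr (I j) (restr B (I j)) (I j.-1))).

Definition nested (B N : {set {set T}}) : Prop :=
  N \subset B :\ [set: T] /\
  (forall X Y, X \in N -> Y \in N -> [|| X \subset Y, Y \subset X | [disjoint X & Y]]) /\
  (forall P : {set {set T}}, P \subset N -> 2 <= #|P| ->
     (forall X Y, X \in P -> Y \in P -> X != Y -> [disjoint X & Y]) ->
     \bigcup_(X in P) X \notin B).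

Definition maximal_nested (B N : {set {set T}}) : Prop :=
  nested B N /\ (forall N', nested B N' -> N \subset N' -> N' = N).

End Building.

From mathcomp Require Import all_boot zify.

(* Discreteness of (B|I_m)/I_(m-1) says that a member of B inside I_m contains
   at most one point of level m.  Hence a member C of B lies inside S_t for its
   point t of maximal level, two sets S_i meeting at a point are comparable (the
   one of smaller level inside the other), and S_i, S_j never contain each
   other's centres.  This gives the unique top set, injectivity and the
   nested-set axioms.  For maximality, suppose a nested set containing N had a
   member X outside N.  With t the point of X of maximal level, X is a proper
   subset of S_t, and X together with the maximal sets S_y for y in S_t \ X is a
   family of at least two pairwise disjoint members whose union is S_t \in B. *)

Section SplittingChainSets.

Context {T : finType} {B : {set {set T}}} {k : nat} {I : nat -> {set T}}.
Context {l : T -> nat} {S : T -> {set T}}.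

Hypothesis B_neq0 : forall X, X \in B -> X != set0.
Hypothesis B_union :
  forall X Y, X \in B -> Y \in B -> X :&: Y != set0 -> X :|: Y \in B.
Hypothesis B_top : [set: T] \in B.
Hypothesis I_proper : forall j, j < k -> I j \proper I j.+1.
Hypothesis I_discrete :
  forall j, 1 <= j <= k -> discrete_bs (contr (I j) (restr B (I j)) (I j.-1)).
Hypothesis l_spec : forall i, 1 <= l i <= k /\ i \in I (l i) :\: I (l i).-1.
Hypothesis S_spec : forall i,
  [/\ S i \in B, i \in S i, S i \subset I (l i).-1 :|: [set i] &
      forall J, J \in B -> i \in J -> J \subset I (l i).-1 :|: [set i] ->
      J \subset S i].

Lemma level_bounds i : 1 <= l i <= k.
Proof. by case: (l_spec i). Qed.

Lemma mem_chain_level i : i \in I (l i).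
Proof. by case: (l_spec i) => _ /setDP[]. Qed.

Lemma notin_chain_prev_level i : i \notin I (l i).-1.
Proof. by case: (l_spec i) => _ /setDP[]. Qed.

Lemma S_in_B i : S i \in B.
Proof. by case: (S_spec i). Qed.

Lemma mem_S i : i \in S i.
Proof. by case: (S_spec i). Qed.

Lemma S_sub_prev i : S i \subset I (l i).-1 :|: [set i].
Proof. by case: (S_spec i). Qed.

Lemma S_max i J :
  J \in B -> i \in J -> J \subset I (l i).-1 :|: [set i] -> J \subset S i.
Proof. by case: (S_spec i) => _ _ _; apply. Qed.

Lemma chain_sub j j' : j <= j' <= k -> I j \subset I j'.
Proof.
move=> /andP[]; elim: j' j => [|j' IH] j le_jj' le_j'k.
  by move: le_jj'; rewrite leqn0 => /eqP->.
case: (ltngtP j j'.+1) le_jj' => // [lt_jj' _|-> _]; last exact: subxx.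
apply: subset_trans (IH j lt_jj' (ltnW le_j'k)) _.
exact: proper_sub (I_proper _ le_j'k).
Qed.

Lemma level_leq {i j} : j <= k -> i \in I j -> l i <= j.
Proof.
move=> le_jk iIj; rewrite leqNgt; apply/negP => lt_jl.
have [_ le_lk] := andP (level_bounds i).
move/negP: (notin_chain_prev_level i); apply.
by apply: (subsetP (@chain_sub j _ _)) iIj; apply/andP; split; lia.
Qed.

Lemma mem_chain i m : l i <= m <= k -> i \in I m.
Proof. by move/chain_sub/subsetP; apply; apply: mem_chain_level. Qed.

Lemma S_sub_chain i : S i \subset I (l i).
Proof.
apply/subsetP => x /(subsetP (S_sub_prev i)); rewrite inE => /orP[xI|/set1P->].
  by apply: (subsetP (@chain_sub _ _ _)) xI; have := level_bounds i; lia.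
exact: mem_chain_level.
Qed.

Lemma new_point_uniq {C m x y} : C \in B -> 1 <= m <= k -> C \subset I m ->
  x \in C -> y \in C -> x \notin I m.-1 -> y \notin I m.-1 -> x = y.
Proof.
move=> CB le_1mk CI xC yC xI yI.
have : C :\: I m.-1 \in contr (I m) (restr B (I m)) (I m.-1).
  rewrite inE; apply/andP; split; first (apply/andP; split).
  - by apply/set0Pn; exists x; rewrite inE xI.
  - by apply/subsetP => z /setDP[zC zI]; rewrite inE zI (subsetP CI).
  apply/existsP; exists (C :&: I m.-1); rewrite subsetIr /=; apply/orP; right.
  by rewrite setUC setID inE CB CI.
move/(I_discrete _ le_1mk)/eqP/cards1P => [z Cz].
have : x \in [set z] by rewrite -Cz inE xI.
have : y \in [set z] by rewrite -Cz inE yI.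
by rewrite !inE => /eqP-> /eqP->.
Qed.

Lemma mem_S_level {x j} : x \in S j -> x = j \/ l x < l j.
Proof.
move/(subsetP (S_sub_prev j)); rewrite inE => /orP[xI|/set1P]; last by left.
have [l_gt0 le_lk] := andP (level_bounds j).
by right; have := level_leq (leq_trans (leq_pred _) le_lk) xI; lia.
Qed.

Lemma block_sub_S {C} : C \in B -> exists2 t, t \in C & C \subset S t.
Proof.
move=> CB; have /set0Pn[x0 x0C] := B_neq0 _ CB.
case: (@arg_maxnP _ x0 (mem C) l x0C) => t tC tmax; exists t => //.
apply: S_max => //; apply/subsetP => x xC; rewrite inE.
case: (boolP (x \in I (l t).-1)) => //= xI.
have CI : C \subset I (l t).
  apply/subsetP => y yC; apply: mem_chain.
  by have := tmax y yC; have := level_bounds t; lia.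
have xt := new_point_uniq CB (level_bounds t) CI xC tC xI (notin_chain_prev_level t).
by rewrite xt inE.
Qed.

Lemma S_meet_in_B {i j x} : x \in S i -> x \in S j -> S i :|: S j \in B.
Proof.
move=> xi xj; apply: B_union; rewrite ?S_in_B //.
by apply/set0Pn; exists x; rewrite inE xi xj.
Qed.

Lemma S_sub_of_meet {i j x} :
  x \in S i -> x \in S j -> l i < l j -> S i \subset S j.
Proof.
move=> xi xj lt_ij; apply: subset_trans (subsetUl _ (S j)) _.
apply: S_max; rewrite ?(S_meet_in_B xi xj) ?inE ?mem_S ?orbT //.
rewrite subUset S_sub_prev andbT; apply: subset_trans (S_sub_chain i) _.
apply: subset_trans (subsetUl _ [set j]); apply: chain_sub.
by have := level_bounds j; lia.
Qed.

Lemma S_meet_same_level {i j x} : x \in S i -> x \in S j -> l i = l j -> i = j.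
Proof.
move=> xi xj eq_l; apply: (new_point_uniq (S_meet_in_B xi xj) (level_bounds i)).
- by rewrite subUset S_sub_chain eq_l S_sub_chain.
- by rewrite inE mem_S.
- by rewrite inE mem_S orbT.
- exact: notin_chain_prev_level.
- by rewrite eq_l notin_chain_prev_level.
Qed.

Lemma S_laminar i j : [|| S i \subset S j, S j \subset S i | [disjoint S i & S j]].
Proof.
case: (boolP [disjoint S i & S j]) => [_|]; first by rewrite !orbT.
rewrite -setI_eq0 => /set0Pn[x]; rewrite inE => /andP[xi xj].
case: (ltngtP (l i) (l j)) => lij.
- by rewrite (S_sub_of_meet xi xj).
- by rewrite (S_sub_of_meet xj xi) ?orbT.
- by rewrite (S_meet_same_level xi xj) // subxx.
Qed.

Lemma S_antisym {i j} : i \in S j -> j \in S i -> i = j.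
Proof.
move=> ij ji; case: (mem_S_level ij) => [//|lt_ij].
by case: (mem_S_level ji) => [->//|lt_ji]; lia.
Qed.

Lemma S_top_unique : exists! i, S i = [set: T].
Proof.
have [t _ Vt] := block_sub_S B_top.
have St : S t = [set: T] by apply/eqP; rewrite eqEsubset subsetT.
by exists t; split => // j Sj; apply: S_antisym; rewrite ?St ?Sj inE.
Qed.

Lemma S_inj : injective S.
Proof.
by move=> i j Sij; apply: S_antisym; [rewrite -Sij | rewrite Sij]; apply: mem_S.
Qed.

Lemma S_below {i y} : y \in S i -> y != i -> [/\ S y \subset S i & i \notin S y].
Proof.
move=> yi ne_yi.
have lt_yi : l y < l i by case: (mem_S_level yi) => // e; rewrite e eqxx in ne_yi.
split; first exact: S_sub_of_meet (mem_S y) yi lt_yi.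
by apply/negP => /S_antisym/(_ yi) e; rewrite e eqxx in ne_yi.
Qed.

Definition S_nested := [set S i | i in [set: T]] :\ [set: T].

Lemma mem_S_nested X :
  reflect (X != [set: T] /\ exists i, X = S i) (X \in S_nested).
Proof.
rewrite in_setD1; apply: (iffP andP) => [[XV /imsetP[i _ Xi]]|[XV [i Xi]]].
  by split => //; exists i.
by split => //; apply/imsetP; exists i.
Qed.

Lemma S_nested_centre {X} : X \in S_nested -> exists2 j, X = S j & j \in X.
Proof. by case/mem_S_nested => _ [j ->]; exists j; rewrite ?mem_S. Qed.

Lemma S_nested_nested : nested B S_nested.
Proof.
split; [|split].
- apply/subsetP => X /mem_S_nested[XV [i Xi]].
  by rewrite in_setD1 XV Xi S_in_B.
- by move=> X Y /mem_S_nested[_ [i ->]] /mem_S_nested[_ [j ->]]; apply: S_laminar.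
move=> P PN P2 Pdis; apply/negP => UB.
have [t tU Ut] := block_sub_S UB.
case/bigcupP: tU => Z1 Z1P tZ1.
have [i Z1i iZ1] := S_nested_centre (subsetP PN Z1 Z1P).
have ti : t = i.
  by apply: S_antisym; [rewrite -Z1i | apply: (subsetP Ut); apply/bigcupP; exists Z1].
have [Z2 Z2P] : exists Z2, Z2 \in P :\ Z1.
  by apply/set0Pn; rewrite -card_gt0; move: P2; rewrite (cardsD1 Z1) Z1P; lia.
move: Z2P; rewrite in_setD1 => /andP[ne_Z21 Z2P].
have [j _ jZ2] := S_nested_centre (subsetP PN Z2 Z2P).
have jZ1 : j \in Z1 by rewrite Z1i -ti; apply: (subsetP Ut); apply/bigcupP; exists Z2.
have Z12 : [disjoint Z1 & Z2] by apply: Pdis; rewrite // eq_sym.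
by rewrite (disjointFr Z12 jZ1) in jZ2.
Qed.

Section Maximality.

Variables (N : {set {set T}}) (X : {set T}) (t : T).
Hypothesis N_nested : nested B N.
Hypothesis N_sup_S_nested : S_nested \subset N.
Hypothesis X_in_N : X \in N.
Hypothesis t_in_X : t \in X.
Hypothesis X_proper : X \proper S t.

Local Notation D := (S t :\: X).

Lemma below_in_N {y} : y \in D -> [/\ S y \subset S t, t \notin S y & S y \in N].
Proof.
case/setDP => yt yX; have ne_yt : y != t by apply: contraNneq yX => ->.
have [sub_yt tSy] := S_below yt ne_yt; split => //.
apply: (subsetP N_sup_S_nested); apply/mem_S_nested; split; last by exists y.
by apply: contraNneq tSy => ->; rewrite inE.
Qed.

(* Maximizing the size makes two sets S (cover y) equal or disjoint, as the S i
   are laminar. *)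
Definition cover y := [arg max_(y' > y | (y' \in D) && (y \in S y')) #|S y'|].

Lemma coverP {y} : y \in D -> [/\ cover y \in D, y \in S (cover y) &
  forall y', y' \in D -> y \in S y' -> #|S y'| <= #|S (cover y)|].
Proof.
move=> yD; rewrite /cover; case: arg_maxnP => [|z /andP[zD yz] zmax].
  by rewrite yD mem_S.
by split => // y' y'D yy'; apply: zmax; rewrite y'D yy'.
Qed.

Lemma disjoint_X_cover y : y \in D -> [disjoint X & S (cover y)].
Proof.
move=> yD; have [cD _ _] := coverP yD; have [_ tS cN] := below_in_N cD.
case: N_nested => _ [laminar _].
case/or3P: (laminar X (S (cover y)) X_in_N cN) => // sub.
- by rewrite (subsetP sub t t_in_X) in tS.
- by move: cD; rewrite inE (subsetP sub _ (mem_S _)).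
Qed.

Lemma disjoint_cover y1 y2 : y1 \in D -> y2 \in D ->
  S (cover y1) != S (cover y2) -> [disjoint S (cover y1) & S (cover y2)].
Proof.
move=> y1D y2D neq.
have [c1D y1c max1] := coverP y1D; have [c2D y2c max2] := coverP y2D.
case/or3P: (S_laminar (cover y1) (cover y2)) => // sub.
- have le := max1 _ c2D (subsetP sub _ y1c).
  by move: neq; rewrite eqEcard sub le.
- have le := max2 _ c1D (subsetP sub _ y2c).
  by move: neq; rewrite eq_sym eqEcard sub le.
Qed.

Definition cover_family := X |: [set S (cover y) | y in D].

Lemma cover_family_disjoint A C : A \in cover_family -> C \in cover_family ->
  A != C -> [disjoint A & C].
Proof.
case/setU1P => [->|/imsetP[y1 y1D ->]] /setU1P[->|/imsetP[y2 y2D ->]] AC.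
- by rewrite eqxx in AC.
- exact: disjoint_X_cover.
- by rewrite disjoint_sym; apply: disjoint_X_cover.
- exact: disjoint_cover.
Qed.

Lemma cover_family_sub : cover_family \subset N.
Proof.
apply/subsetP => Z /setU1P[->//|/imsetP[y yD ->]].
by have [cD _ _] := coverP yD; case: (below_in_N cD).
Qed.

Lemma cover_family_card : 1 < #|cover_family|.
Proof.
have /properP[_ [y0 y0S y0X]] := X_proper.
have y0D : y0 \in D by rewrite inE y0X y0S.
have ne_X : X != S (cover y0).
  have [cD _ _] := coverP y0D; have [_ tS _] := below_in_N cD.
  by apply: contraNneq tS => <-.
apply: leq_trans (subset_leq_card (_ : [set X; S (cover y0)] \subset _)).
  by rewrite cards2 ne_X.
apply/subsetP => Z /set2P[->|->]; first exact: setU11.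
by apply: setU1r; apply/imsetP; exists y0.
Qed.

Lemma bigcup_cover_family : \bigcup_(Z in cover_family) Z = S t.
Proof.
apply/eqP; rewrite eqEsubset; apply/andP; split.
  apply/bigcupsP => Z /setU1P[->|/imsetP[y yD ->]]; first exact: proper_sub.
  by have [cD _ _] := coverP yD; case: (below_in_N cD).
apply/subsetP => x xS; case: (boolP (x \in X)) => xX.
  by apply/bigcupP; exists X => //; apply: setU11.
have xD : x \in D by rewrite inE xX xS.
apply/bigcupP; exists (S (cover x)); last by case: (coverP xD).
by apply: setU1r; apply/imsetP; exists x.
Qed.

Lemma proper_sub_S_not_nested : False.
Proof.
case: N_nested => _ [_ /(_ _ cover_family_sub cover_family_card)].
by rewrite bigcup_cover_family S_in_B => /(_ cover_family_disjoint).
Qed.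

End Maximality.

Lemma S_nested_maximal : maximal_nested B S_nested.
Proof.
split=> [|N N_nested sub_N]; first exact: S_nested_nested.
apply/eqP; rewrite eqEsubset sub_N andbT; apply/subsetP => X XN.
have [N_sub _] := N_nested.
move: (subsetP N_sub X XN); rewrite in_setD1 => /andP[XV XB].
have [t tX Xt] := block_sub_S XB.
case: (eqVneq X (S t)) => [eX | ne_X].
  by apply/mem_S_nested; split => //; exists t.
by case: (@proper_sub_S_not_nested N X t); rewrite ?properEneq ?ne_X.
Qed.

End SplittingChainSets.

Theorem mainTheorem3 (n : nat) (B : {set {set 'I_n}})
  (k : nat) (I : nat -> {set 'I_n})
  (l : 'I_n -> nat) (S : 'I_n -> {set 'I_n}) :
  building_set B -> connected_bs B ->
  splitting_chain B k I ->
  (* l i is the unique j (1 <= j <= k) with i \in I_j \ I_(j-1) *)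
  (forall i, 1 <= l i <= k /\ i \in I (l i) :\: I (l i).-1) ->
  (* S i is the largest element of B containing i, contained in I_(l i - 1) \cup {i} *)
  (forall i, [/\ S i \in B, i \in S i, S i \subset I (l i).-1 :|: [set i] &
     forall J, J \in B -> i \in J -> J \subset I (l i).-1 :|: [set i] -> J \subset S i]) ->
  (exists! i, S i = [set: 'I_n]) /\
  injective S /\
  maximal_nested B ([set S i | i in [set: 'I_n]] :\ [set: 'I_n]).
Proof.
move=> [B_sub [_ B_union]] B_top [_ [_ [I_proper I_discrete]]] l_spec S_spec.
have B_neq0 X : X \in B -> X != set0 by case/B_sub.
split; first exact: (S_top_unique B_neq0 B_top I_proper I_discrete l_spec S_spec).
split; first exact: (S_inj B_top I_proper l_spec S_spec).
exact: (S_nested_maximal B_neq0 B_union B_top I_proper I_discrete l_spec S_spec).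
Qed.
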